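(* Let $A$ be a finite set and $p : A \to [0,1]$. Let $\{X_i(u)\}_{i \ge 1, u \in A}$ be independent random variables with $X_i(u) \sim \mathrm{Bernoulli}(p(u))$. For $n \ge 1$ define $U_n(u) := \mathds{1}\{\sum_{i=1}^n X_i(u) = 1\}$, $Z_n(u) := \mathds{1}\{X_1(u) = \cdots = X_n(u) = 0\}$, $R_n := \sum_{u \in A} Z_n(u)\, p(u)$, $\hat R_n := \frac{1}{n}\sum_{u \in A} U_n(u)$, and $\lambda := \sum_{u \in A} p(u)$. For $\delta \in (0,1)$ let \[ \beta_n := \left(1+\sqrt{2}\right)\sqrt{\frac{\lambda \log(4/\delta)}{n}} + \frac{1}{3n}\log\frac{4}{\delta}. \] Then with probability at least $1-\delta$, \[ -\beta_n - \frac{\lambda}{n} \le R_n - \hat R_n \le \beta_n . \]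
   Context: Model: a single influencer is connected to a finite set $A$ of basic nodes; at each selection $i$ of the influencer, each node $u\in A$ is activated ($X_i(u)=1$) independently with probability $p(u)$, independently across selections. $R_n$ is the remaining potential (expected number of new activations at the next selection) and $\hat R_n$ is the Good-Turing estimator (proportion of hapaxes). *)

From mathcomp Require Import all_boot.
From Stdlib Require Import Reals.

Set Implicit Arguments.
Unset Strict Implicit.
Unset Printing Implicit Defensive.

(* Outcomes of the first n selections: w (i, u) = X_{i+1}(u). *)
Definition outcome (A : finType) (n : nat) := {ffun 'I_n * A -> bool}.

Definition weight (A : finType) (p : A -> R) (n : nat) (w : outcome A n) : R :=
  \big[Rmult/1%R]_(k : 'I_n * A) (if w k then p k.2 else (1 - p k.2)%R).

Definition prob (A : finType) (p : A -> R) (n : nat) (E : outcome A n -> bool) : R :=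
  \big[Rplus/0%R]_(w : outcome A n | E w) weight p w.

Definition nact (A : finType) (n : nat) (w : outcome A n) (u : A) : nat :=
  \sum_(i < n) w (i, u).

Definition Un (A : finType) (n : nat) (w : outcome A n) (u : A) : bool := nact w u == 1.
Definition Zn (A : finType) (n : nat) (w : outcome A n) (u : A) : bool := nact w u == 0.

Definition Rn (A : finType) (p : A -> R) (n : nat) (w : outcome A n) : R :=
  \big[Rplus/0%R]_(u : A) (if Zn w u then p u else 0%R).

Definition Rhat (A : finType) (n : nat) (w : outcome A n) : R :=
  (INR (\sum_(u : A) Un w u) / INR n)%R.

Definition lambda (A : finType) (p : A -> R) : R := \big[Rplus/0%R]_(u : A) p u.

Definition beta (A : finType) (p : A -> R) (n : nat) (delta : R) : R :=
  ((1 + sqrt 2) * sqrt (lambda p * ln (4 / delta) / INR n)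
   + / (3 * INR n) * ln (4 / delta))%R.

Definition Rleb (x y : R) : bool := if Rle_dec x y then true else false.

(* Write [R_n - \hat R_n] as the sum over nodes [u] of
   [p(u) [u never activated] - [u activated exactly once] / n]; each term depends
   only on the activation history of [u], so the terms are independent and the
   moment generating function of the gap is a product of explicit one-node
   factors [node_mgf].  Elementary exponential inequalities bound these factors,
   at [t = n / y] by [exp (n p(u) / y^2)] and at [t = - n s] by
   [exp ((s + n (e^s - 1 - s + s^2/2)) p(u))], where [y = sqrt (n lambda / L)]
   and [L = ln (4 / delta)].  The two Chernoff bounds give each one-sided
   deviation probability at most [exp (- L) = delta / 4], and a union bound
   concludes. *)

From mathcomp Require Import all_boot.
From HB Require Import structures.
From Stdlib Require Import Reals Lra Psatz.
From Coquelicot Require Coquelicot.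

Set Implicit Arguments.
Unset Strict Implicit.
Unset Printing Implicit Defensive.

Section ExpInequalities.
Import Coquelicot.Coquelicot.
Local Open Scope R_scope.

Lemma nonneg_of_derive_nonneg (f df : R -> R) (x : R) : 0 <= x -> f 0 = 0 ->
  (forall y, 0 <= y <= x -> is_derive f y (df y)) ->
  (forall y, 0 <= y <= x -> 0 <= df y) -> 0 <= f x.
Proof.
move=> hx f0 f_deriv df_ge0.
have [->|x_neq0] := Req_dec x 0; first lra.
have [c [c_ge0 [c_le_x ->]]] : exists c, 0 <= c /\ c <= x /\ f x = f 0 + df c * (x - 0).
  apply: MVT_cor3; first lra.
  by move=> y hy0 hyx; apply/is_derive_Reals/f_deriv; lra.
rewrite f0; have := df_ge0 c (conj c_ge0 c_le_x); nra.
Qed.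

Lemma exp_neg_le_quadratic s : 0 <= s -> exp (- s) <= 1 - s + s ^ 2 / 2.
Proof.
move=> s_ge0.
suff : 0 <= 1 - s + s ^ 2 / 2 - exp (- s) by lra.
apply: (@nonneg_of_derive_nonneg (fun x => 1 - x + x ^ 2 / 2 - exp (- x))
  (fun x => -1 + x + exp (- x)) s s_ge0).
- by rewrite /= Ropp_0 exp_0; lra.
- by move=> y _; auto_derive; auto; lra.
- by move=> y _; have := exp_ineq1_le (- y); lra.
Qed.

Lemma exp_sub_linear_le s : 0 <= s -> exp s - 1 - s <= s ^ 2 / 2 * exp s.
Proof.
move=> s_ge0.
have : 0 <= exp (- s) * (1 + s) - 1 + s ^ 2 / 2.
  apply: (@nonneg_of_derive_nonneg (fun x => exp (- x) * (1 + x) - 1 + x ^ 2 / 2)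
    (fun x => x * (1 - exp (- x))) s s_ge0).
  - by rewrite /= Ropp_0 exp_0; lra.
  - by move=> y _; auto_derive; auto; lra.
  - move=> y [y_ge0 _]; apply: Rmult_le_pos => //.
    have : exp (- y) * exp y = 1 by rewrite -exp_plus Rplus_opp_l exp_0.
    have := exp_ineq1_le y; have := exp_pos (- y); nra.
have : exp (- s) * exp s = 1 by rewrite -exp_plus Rplus_opp_l exp_0.
have := exp_pos s; nra.
Qed.

(* The damping factor [exp (- x)] absorbs the growth of [exp (c x)], leaving a
   bound linear in [x]. *)
Lemma exp_neg_mul_sub_linear_le c x : 0 <= c <= 1 -> 0 <= x ->
  exp (- x) * (exp (c * x) - 1 - c * x) <= c ^ 2 * x / 2.
Proof.
move=> hc x_ge0.
suff : 0 <= c ^ 2 * x / 2 - exp (- x) * (exp (c * x) - 1 - c * x) by lra.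
apply: (@nonneg_of_derive_nonneg (fun x => c ^ 2 * x / 2 - exp (- x) * (exp (c * x) - 1 - c * x))
  (fun x => c ^ 2 / 2 + exp (- x) * (exp (c * x) - 1 - c * x)
            - exp (- x) * (c * exp (c * x) - c)) x x_ge0).
- by rewrite /= Ropp_0 !Rmult_0_r exp_0; lra.
- by move=> y _; auto_derive; auto; lra.
move=> y [y_ge0 _].
have exp_cy := exp_ineq1_le (c * y).
have exp_y : 1 + y + y ^ 2 / 2 <= exp y.
  by have := exp_ge_taylor y 2 y_ge0; rewrite /sum_f_R0 /=; lra.
have exp_inv : exp (- y) * exp y = 1 by rewrite -exp_plus Rplus_opp_l exp_0.
have exp_neg_y_gt0 := exp_pos (- y).
have y_exp_le : y * exp (- y) <= 1 / 2 by nra.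
have : exp (- y) * ((1 - c) * (1 - exp (c * y)) + c * y) <= exp (- y) * (c ^ 2 * y).
  by apply: Rmult_le_compat_l; nra.
have : exp (- y) * (c ^ 2 * y) <= c ^ 2 / 2 by nra.
nra.
Qed.

End ExpInequalities.

Local Open Scope R_scope.

Lemma exp_le_compat x y : x <= y -> exp x <= exp y.
Proof. by case=> [/exp_increasing/Rlt_le | ->]; [| lra]. Qed.

Lemma exp_pow x (m : nat) : exp x ^ m = exp (INR m * x).
Proof.
elim: m => [|m IH]; first by rewrite /= Rmult_0_l exp_0.
by rewrite S_INR /= IH -exp_plus; congr exp; ring.
Qed.

Lemma pow_one_sub_le_exp q (m : nat) : 0 <= q <= 1 -> (1 - q) ^ m <= exp (- (INR m * q)).
Proof.
move=> hq; rewrite Ropp_mult_distr_r -exp_pow; apply: pow_incr.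
by have := exp_ineq1_le (- q); lra.
Qed.

Lemma pow_one_sub_bounds q (m : nat) : 0 <= q <= 1 -> 0 <= (1 - q) ^ m <= 1.
Proof.
move=> hq; split; first by apply: pow_le; lra.
by rewrite -{2}(pow1 m); apply: pow_incr; lra.
Qed.

Lemma pow_one_sub_mul_one_add_le1 q (m : nat) : 0 <= q <= 1 -> (1 - q) ^ m * (1 + INR m * q) <= 1.
Proof.
move=> hq; elim: m => [|m IH]; first by rewrite /=; lra.
rewrite S_INR /=.
have := pow_one_sub_bounds m hq.
have : (1 - q) * (1 + (INR m + 1) * q) <= 1 + INR m * q by have := pos_INR m; nra.
nra.
Qed.

Lemma exp_numeric_bounds :
  exp (1 / 2) <= 1.672 /\ exp 1 <= 2.796 /\ exp 2 <= 7.818 /\ exp 4 <= 61.2.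
Proof.
have exp_double a b : 0 <= b -> exp a <= b -> exp (a + a) <= b * b.
  by move=> b_ge0 hab; rewrite exp_plus; have := exp_pos a; nra.
have e20 : exp (1 / 20) <= 1.05264.
  have := exp_ineq1_le (- (1 / 20)).
  have : exp (- (1 / 20)) * exp (1 / 20) = 1 by rewrite -exp_plus Rplus_opp_l exp_0.
  have := exp_pos (1 / 20); nra.
have e10 : exp (1 / 10) <= 1.1081.
  have := exp_double (1 / 20) 1.05264 ltac:(lra) e20.
  by replace (1 / 20 + 1 / 20) with (1 / 10) by field; lra.
have e5 : exp (1 / 5) <= 1.228.
  have := exp_double (1 / 10) 1.1081 ltac:(lra) e10.
  by replace (1 / 10 + 1 / 10) with (1 / 5) by field; lra.
have e25 : exp (2 / 5) <= 1.508.
  have := exp_double (1 / 5) 1.228 ltac:(lra) e5.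
  by replace (1 / 5 + 1 / 5) with (2 / 5) by field; lra.
have e2 : exp (1 / 2) <= 1.672.
  replace (1 / 2) with (2 / 5 + 1 / 10) by field; rewrite exp_plus.
  have := exp_pos (2 / 5); have := exp_pos (1 / 10); nra.
have e1 : exp 1 <= 2.796.
  have := exp_double (1 / 2) 1.672 ltac:(lra) e2.
  by replace (1 / 2 + 1 / 2) with 1 by field; lra.
have e_2 : exp 2 <= 7.818.
  have := exp_double 1 2.796 ltac:(lra) e1.
  by replace (1 + 1) with 2 by field; lra.
have e_4 : exp 4 <= 61.2.
  have := exp_double 2 7.818 ltac:(lra) e_2.
  by replace (2 + 2) with 4 by field; lra.
by [].
Qed.

Lemma sqrt2_ge : 1.41 <= sqrt 2.
Proof. have := sqrt_sqrt 2 ltac:(lra); have := sqrt_pos 2; nra. Qed.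

(* An explicit choice of the Chernoff parameter [s] of the lower tail, by cases on
   [y]; the threshold [2.41] is a lower bound for [1 + sqrt 2]. *)
Lemma lower_tail_exponent y r : 0 <= y -> 2.41 <= r -> exists2 s, 0 <= s &
  y ^ 2 * (exp s - 1 - s + s ^ 2 / 2) - s * (r * y + 1 / 3) <= -1.
Proof.
move=> y_ge0 r_ge.
have [e_half [e_1 [e_2 e_4]]] := exp_numeric_bounds.
have [y_le1|y_gt1] := Rle_lt_dec y (1 / 10).
  exists 4; first lra.
  have : y ^ 2 <= y / 10 by nra.
  nra.
have [y_le2|y_gt2] := Rle_lt_dec y (1 / 2).
  exists 2; first lra.
  have : y ^ 2 <= 0.6 * y - 0.05 by nra.
  nra.
have [y_le3|y_gt3] := Rle_lt_dec y (3 / 2).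
  exists 1; first lra.
  have : y ^ 2 <= 2 * y - 0.75 by nra.
  nra.
have [y_le4|y_gt4] := Rle_lt_dec y 2.
  exists (1 / 2); first lra.
  have : y ^ 2 <= 3.5 * y - 3 by nra.
  nra.
have y_inv_gt0 : 0 < / y by apply: Rinv_0_lt_compat; lra.
exists (/ y); first lra.
have y_inv_le : / y <= 1 / 2.
  by apply: Rle_trans (_ : / 2 <= 1 / 2); [apply: Rinv_le_contravar|]; lra.
have y_mul_inv : y * / y = 1 by field; lra.
have := exp_sub_linear_le (Rlt_le _ _ y_inv_gt0).
have : exp (/ y) <= 1.672 by apply: Rle_trans e_half; apply: exp_le_compat; lra.
set s := / y in y_inv_gt0 y_inv_le y_mul_inv * => exp_s_le rem_le.
have ys2 : y ^ 2 * s ^ 2 = 1 by rewrite -Rpow_mult_distr y_mul_inv pow1.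
have : y ^ 2 * (exp s - 1 - s + s ^ 2 / 2) <= y ^ 2 * (s ^ 2 / 2 * 1.672 + s ^ 2 / 2).
  by apply: Rmult_le_compat_l; [nra | have := exp_pos s; nra].
nra.
Qed.

(* [node_mgf q n t] is the moment generating function at [t] of the contribution
   [q [no activation] - [exactly one activation] / n] of a node activated with
   probability [q] in each of [n] selections (see [trials_expect_exp_node_gap]). *)
Definition node_mgf (q : R) (n : nat) (t : R) : R :=
  1 + (1 - q) ^ n * (exp (t * q) - 1)
    + INR n * q * (1 - q) ^ n.-1 * (exp (- t / INR n) - 1).

Lemma pow_pred_mul (x : R) (n : nat) : (0 < n)%nat -> x ^ n = x ^ n.-1 * x.
Proof. by case: n => // n _; rewrite /= Rmult_comm. Qed.

Lemma mul_pow_one_sub_pred_le1 q (n : nat) : 0 <= q <= 1 -> (0 < n)%nat ->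
  INR n * q * (1 - q) ^ n.-1 <= 1.
Proof.
move=> hq n_gt0.
have := pow_one_sub_mul_one_add_le1 n.-1 hq.
have -> : INR n.-1 = INR n - 1 by rewrite -(prednK n_gt0) S_INR /=; ring.
have := pow_one_sub_bounds n.-1 hq; nra.
Qed.

Lemma node_mgf_pos_le q (n : nat) c : 0 <= q <= 1 -> (0 < n)%nat -> 0 < c <= 1 ->
  node_mgf q n (INR n * c) <= exp (INR n * c ^ 2 * q).
Proof.
move=> hq n_gt0 hc.
have N_gt0 : 0 < INR n by apply/lt_0_INR/ltP.
rewrite /node_mgf; set N := INR n in N_gt0 *; set x := N * q.
have x_ge0 : 0 <= x by rewrite /x; nra.
have -> : N * c * q = c * x by rewrite /x; ring.
have -> : - (N * c) / N = - c by field; lra.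
have a_eq := pow_pred_mul (1 - q) n_gt0.
set b := (1 - q) ^ n.-1 in a_eq *; set a := (1 - q) ^ n in a_eq *.
have b_bounds : 0 <= b <= 1 by apply: pow_one_sub_bounds.
have a_le : a <= exp (- x) by apply: pow_one_sub_le_exp.
have exp_cx := exp_ineq1_le (c * x).
have : a * (exp (c * x) - 1 - c * x) <= c ^ 2 * x / 2.
  have c_bounds : 0 <= c <= 1 by lra.
  apply: Rle_trans (exp_neg_mul_sub_linear_le c_bounds x_ge0).
  by apply: Rmult_le_compat_r; lra.
have : x * b * (exp (- c) - 1) <= x * b * (- c + c ^ 2 / 2).
  apply: Rmult_le_compat_l; first by apply: Rmult_le_pos; lra.
  by have := exp_neg_le_quadratic (Rlt_le _ _ (proj1 hc)); lra.
have : 1 + c ^ 2 * x <= exp (N * c ^ 2 * q).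
  by rewrite (_ : N * c ^ 2 * q = c ^ 2 * x); [exact: exp_ineq1_le | rewrite /x; ring].
have : x * b * c ^ 2 / 2 <= x * c ^ 2 / 2.
  have : 0 <= x * c ^ 2 * (1 - b) by apply: Rmult_le_pos; nra.
  lra.
have : 0 <= x * b * q * c by apply: Rmult_le_pos; [apply: Rmult_le_pos; nra | lra].
rewrite /x in x_ge0 *; nra.
Qed.

Lemma node_mgf_neg_le q (n : nat) s : 0 <= q <= 1 -> (0 < n)%nat -> 0 <= s ->
  node_mgf q n (- (INR n * s)) <= exp ((s + INR n * (exp s - 1 - s + s ^ 2 / 2)) * q).
Proof.
move=> hq n_gt0 s_ge0.
have xb_le1 := mul_pow_one_sub_pred_le1 hq n_gt0.
have N_gt0 : 0 < INR n by apply/lt_0_INR/ltP.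
rewrite /node_mgf; set N := INR n in N_gt0 xb_le1 *; set x := N * q in xb_le1 *.
have x_ge0 : 0 <= x by rewrite /x; nra.
have -> : - (N * s) * q = - (s * x) by rewrite /x; ring.
have -> : - - (N * s) / N = s by field; lra.
have a_eq := pow_pred_mul (1 - q) n_gt0.
set b := (1 - q) ^ n.-1 in a_eq xb_le1 *; set a := (1 - q) ^ n in a_eq *.
have b_bounds : 0 <= b <= 1 by apply: pow_one_sub_bounds.
have a_ge0 : 0 <= a by rewrite a_eq; nra.
have sx_ge0 : 0 <= s * x by nra.
have exp_s := exp_ineq1_le s.
set phi := exp s - 1 - s + s ^ 2 / 2.
have : 1 + (s + N * phi) * q <= exp ((s + N * phi) * q) by exact: exp_ineq1_le.
suff : a * (exp (- (s * x)) - 1) + x * b * (exp s - 1) <= s * q + x * phi.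
  by rewrite /x; lra.
have : a * (exp (- (s * x)) - 1) <= a * (- (s * x) + (s * x) ^ 2 / 2).
  by apply: Rmult_le_compat_l; have := exp_neg_le_quadratic sx_ge0; lra.
have : x * b * (exp s - 1 - s) <= x * (exp s - 1 - s).
  have : 0 <= x * (exp s - 1 - s) * (1 - b) by apply: Rmult_le_pos; nra.
  nra.
have ax_le1 : a * x <= 1 by rewrite a_eq; nra.
have : a * (s * x) ^ 2 / 2 <= s ^ 2 * x / 2.
  have -> : a * (s * x) ^ 2 / 2 = (a * x) * (s ^ 2 * x / 2) by field.
  have : 0 <= s ^ 2 * x / 2 by nra.
  nra.
have : - a * s * x + x * b * s <= s * q.
  have -> : - a * s * x + x * b * s = s * q * (x * b) by rewrite a_eq /x; ring.
  have : 0 <= s * q by nra.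
  nra.
rewrite /phi; nra.
Qed.

HB.instance Definition _ := Monoid.isComLaw.Build R 0 Rplus
  (fun x y z => esym (Rplus_assoc x y z)) Rplus_comm Rplus_0_l.
HB.instance Definition _ := Monoid.isComLaw.Build R 1 Rmult
  (fun x y z => esym (Rmult_assoc x y z)) Rmult_comm Rmult_1_l.
HB.instance Definition _ := Monoid.isMulLaw.Build R 0 Rmult Rmult_0_l Rmult_0_r.
HB.instance Definition _ := Monoid.isAddLaw.Build R Rmult Rplus
  Rmult_plus_distr_r Rmult_plus_distr_l.

Lemma sum_Rle (I : finType) (F G : I -> R) : (forall i, F i <= G i) ->
  \big[Rplus/0]_(i : I) F i <= \big[Rplus/0]_(i : I) G i.
Proof. by move=> FG; apply: (big_ind2 (fun x y => x <= y)) => // *; lra. Qed.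

Lemma prod_Rle (I : finType) (F G : I -> R) : (forall i, 0 <= F i <= G i) ->
  \big[Rmult/1]_(i : I) F i <= \big[Rmult/1]_(i : I) G i.
Proof.
move=> FG; suff [] : 0 <= \big[Rmult/1]_(i : I) F i <= \big[Rmult/1]_(i : I) G i by [].
apply: (big_ind2 (fun x y => 0 <= x <= y)) => [|x1 x2 y1 y2 h1 h2|i _]; last exact: FG.
  by lra.
by split; [apply: Rmult_le_pos | apply: Rmult_le_compat]; lra.
Qed.

Lemma exp_sum (I : finType) (F : I -> R) :
  exp (\big[Rplus/0]_(i : I) F i) = \big[Rmult/1]_(i : I) exp (F i).
Proof. exact: (big_morph exp exp_plus exp_0). Qed.

Lemma iter_Rmult (c : R) (m : nat) : iter m (Rmult c) 1 = c ^ m.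
Proof. by elim: m => //= m ->. Qed.

Lemma iter_Rplus (c : R) (m : nat) : iter m (Rplus c) 0 = INR m * c.
Proof. by elim: m => [|m IH]; rewrite ?S_INR /= ?IH; ring. Qed.

Lemma prod_INR_bool (I : finType) (P : I -> bool) :
  \big[Rmult/1]_(i : I) INR (P i) = INR [forall i, P i].
Proof.
have [allP|/forallPn[j Pj]] := boolP [forall i, P i].
  by apply: big1 => i _; rewrite (forallP allP).
by rewrite (bigD1 j) //= (negbTE Pj) Rmult_0_l.
Qed.

Lemma sum_ffun_prod (I : finType) (F : I -> bool -> R) :
  \big[Rplus/0]_(v : {ffun I -> bool}) \big[Rmult/1]_(i : I) F i (v i)
  = \big[Rmult/1]_(i : I) (F i true + F i false).
Proof. by rewrite -bigA_distr_bigA; apply: eq_bigr => i _; rewrite big_bool. Qed.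

Definition trials_weight (n : nat) (q : R) (v : {ffun 'I_n -> bool}) : R :=
  \big[Rmult/1]_(i < n) (if v i then q else 1 - q).

Definition trials_expect (n : nat) (q : R) (G : {ffun 'I_n -> bool} -> R) : R :=
  \big[Rplus/0]_(v : {ffun 'I_n -> bool}) (trials_weight q v * G v).

Definition successes (n : nat) (v : {ffun 'I_n -> bool}) : nat := \sum_(i < n) v i.

Section Trials.
Variables (n : nat) (q : R).
Implicit Types (v : {ffun 'I_n -> bool}) (F G : {ffun 'I_n -> bool} -> R).

Lemma eq_trials_expect F G : (forall v, F v = G v) -> trials_expect q F = trials_expect q G.
Proof. by move=> FG; apply: eq_bigr => v _; rewrite FG. Qed.

Lemma trials_expectD F G :
  trials_expect q (fun v => F v + G v) = trials_expect q F + trials_expect q G.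
Proof. by rewrite /trials_expect -big_split /=; apply: eq_bigr => v _; ring. Qed.

Lemma trials_expectMr F c : trials_expect q (fun v => F v * c) = trials_expect q F * c.
Proof. by rewrite /trials_expect big_distrl /=; apply: eq_bigr => v _; ring. Qed.

Lemma trials_expect1 : trials_expect (n := n) q (fun _ => 1) = 1.
Proof.
rewrite /trials_expect /trials_weight; under eq_bigr do rewrite Rmult_1_r.
rewrite (sum_ffun_prod (fun _ b => if b then q else 1 - q)).
by apply: big1 => i _; ring.
Qed.

Lemma successes_eq0 v : INR (successes v == 0)%nat = \big[Rmult/1]_(i < n) INR (~~ v i).
Proof.
rewrite prod_INR_bool /successes sum_nat_eq0; congr (INR (nat_of_bool _)).
by apply: eq_forallb => i; case: (v i).
Qed.

Lemma only_success_at v j :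
  [forall i, if i == j then v i else ~~ v i] = v j && (successes v == 1)%nat.
Proof.
rewrite /successes (bigD1 j) //=; apply/forallP/andP => [vj | [vj]].
  have := vj j; rewrite eqxx => ->; split=> //.
  rewrite add1n eqSS sum_nat_eq0; apply/forallP => i; apply/implyP => /negbTE ij.
  by have := vj i; rewrite ij; case: (v i).
rewrite vj add1n eqSS sum_nat_eq0 => /forallP others i.
by case: eqP => [-> //|/eqP ij]; have := others i; rewrite ij; case: (v i).
Qed.

Lemma successes_eq1 v : INR (successes v == 1)%nat =
  \big[Rplus/0]_(j < n) \big[Rmult/1]_(i < n) INR (if i == j then v i else ~~ v i).
Proof.
under eq_bigr do rewrite prod_INR_bool only_success_at.
have INR_andb (a b : bool) : INR (a && b) = INR b * INR a by case: a; case: b => /=; ring.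
under eq_bigr do rewrite INR_andb.
rewrite -big_distrr /=.
have -> : \big[Rplus/0]_(j < n) INR (v j) = INR (successes v).
  by rewrite /successes (big_morph INR plus_INR (erefl (INR 0))).
by case: eqP => [->|_] /=; ring.
Qed.

Lemma prod_if_eq (j : 'I_n) (a b : R) :
  \big[Rmult/1]_(i < n) (if i == j then a else b) = a * b ^ n.-1.
Proof.
rewrite (bigD1 j) //= eqxx (eq_bigr (fun _ => b)) => [|i /negbTE -> //].
by rewrite big_const cardC1 card_ord iter_Rmult.
Qed.

Lemma trials_expect_successes0 :
  trials_expect q (fun v => INR (successes v == 0)%nat) = (1 - q) ^ n.
Proof.
rewrite /trials_expect /trials_weight; under eq_bigr do rewrite successes_eq0 -big_split /=.
rewrite (sum_ffun_prod (fun _ b => (if b then q else 1 - q) * INR (~~ b))).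
by rewrite (eq_bigr (fun _ => 1 - q)) ?big_const_ord ?iter_Rmult // => i _ /=; ring.
Qed.

Lemma trials_expect_successes1 :
  trials_expect q (fun v => INR (successes v == 1)%nat) = INR n * q * (1 - q) ^ n.-1.
Proof.
rewrite /trials_expect; under eq_bigr do rewrite successes_eq1 big_distrr /=.
rewrite exchange_big /= (eq_bigr (fun _ => q * (1 - q) ^ n.-1)).
  by rewrite big_const_ord iter_Rplus Rmult_assoc.
move=> j _; rewrite /trials_weight; under eq_bigr do rewrite -big_split /=.
rewrite (sum_ffun_prod (fun i b => (if b then q else 1 - q)
                                   * INR (if i == j then b else ~~ b))).
by rewrite -(prod_if_eq j); apply: eq_bigr => i _; case: (i == j) => /=; ring.
Qed.

End Trials.

Definition node_gap (n : nat) (q : R) (v : {ffun 'I_n -> bool}) : R :=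
  (if successes v == 0%nat then q else 0) - INR (successes v == 1)%nat / INR n.

Lemma exp_mul_node_gap (n : nat) q t (v : {ffun 'I_n -> bool}) :
  exp (t * node_gap q v) = 1 + INR (successes v == 0)%nat * (exp (t * q) - 1)
                             + INR (successes v == 1)%nat * (exp (- t / INR n) - 1).
Proof.
rewrite /node_gap; case: eqP => [-> | _] /=.
  by rewrite /Rdiv Rmult_0_l Rminus_0_r; ring.
case: eqP => _ /=; last by rewrite /Rdiv Rmult_0_l Rminus_0_r Rmult_0_r exp_0; ring.
by rewrite (_ : t * (0 - 1 / INR n) = - t / INR n); [ring | rewrite /Rdiv; ring].
Qed.

Lemma trials_expect_exp_node_gap (n : nat) q t :
  trials_expect q (fun v : {ffun 'I_n -> bool} => exp (t * node_gap q v)) = node_mgf q n t.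
Proof.
rewrite (eq_trials_expect _ (exp_mul_node_gap q t)) !trials_expectD !trials_expectMr.
by rewrite trials_expect1 trials_expect_successes0 trials_expect_successes1.
Qed.

Lemma node_mgf_ge0 q (n : nat) t : 0 <= q <= 1 -> 0 <= node_mgf q n t.
Proof.
move=> hq; rewrite -trials_expect_exp_node_gap.
apply: (big_ind (fun x => 0 <= x)) => [|x y|v _]; [lra | lra |].
apply: Rmult_le_pos; last exact/Rlt_le/exp_pos.
apply: (big_ind (fun x => 0 <= x)) => [|x y|i _]; [lra | exact: Rmult_le_pos |].
by case: (v i); lra.
Qed.

Definition history (A : finType) (n : nat) (w : outcome A n) (u : A) : {ffun 'I_n -> bool} :=
  [ffun i => w (i, u)].

Definition of_histories (A : finType) (n : nat) (f : {ffun A -> {ffun 'I_n -> bool}}) :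
  outcome A n := [ffun k => f k.2 k.1].

Definition expect (A : finType) (p : A -> R) (n : nat) (X : outcome A n -> R) : R :=
  \big[Rplus/0]_(w : outcome A n) (weight p w * X w).

Lemma RlebP x y : reflect (x <= y) (Rleb x y).
Proof. by rewrite /Rleb; case: Rle_dec => h; constructor. Qed.

Section Outcomes.
Variables (A : finType) (p : A -> R) (n : nat).
Implicit Types (w : outcome A n) (f : {ffun A -> {ffun 'I_n -> bool}})
  (E F : outcome A n -> bool).

Lemma history_of_histories f u : history (of_histories f) u = f u.
Proof. by apply/ffunP => i; rewrite !ffunE. Qed.

Lemma of_histories_bij : bijective (@of_histories A n).
Proof.
exists (fun w => [ffun u => history w u]) => [f | w].
  by apply/ffunP => u; rewrite ffunE history_of_histories.
by apply/ffunP => -[i u]; rewrite !ffunE.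
Qed.

Lemma weight_of_histories f :
  weight p (of_histories f) = \big[Rmult/1]_(u : A) trials_weight (p u) (f u).
Proof.
have -> : weight p (of_histories f) =
    \big[Rmult/1]_(i < n) \big[Rmult/1]_(u : A) (if f u i then p u else 1 - p u).
  by rewrite pair_bigA; apply: eq_bigr => -[i u] _; rewrite ffunE.
by rewrite exchange_big.
Qed.

Lemma expect_prod_history (G : A -> {ffun 'I_n -> bool} -> R) :
  expect p (fun w => \big[Rmult/1]_(u : A) G u (history w u))
  = \big[Rmult/1]_(u : A) trials_expect (p u) (G u).
Proof.
rewrite /trials_expect bigA_distr_bigA /expect (reindex _ (onW_bij _ of_histories_bij)) /=.
apply: eq_bigr => f _; rewrite weight_of_histories -big_split /=.
by apply: eq_bigr => u _; rewrite history_of_histories.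
Qed.

Lemma sum_weight : \big[Rplus/0]_(w : outcome A n) weight p w = 1.
Proof.
transitivity (\big[Rmult/1]_(u : A) trials_expect (p u) (fun _ : {ffun 'I_n -> bool} => 1)).
  by rewrite -expect_prod_history; apply: eq_bigr => w _; rewrite big1 // Rmult_1_r.
by apply: big1 => u _; apply: trials_expect1.
Qed.

Lemma nact_history w u : nact w u = successes (history w u).
Proof. by apply: eq_bigr => i _; rewrite ffunE. Qed.

Lemma Rn_sub_Rhat w : Rn p w - Rhat w = \big[Rplus/0]_(u : A) node_gap (p u) (history w u).
Proof.
rewrite /Rn /Rhat /Zn /Un (big_morph INR plus_INR (erefl (INR 0))) /Rdiv big_distrl /=.
rewrite /Rminus (big_morph Ropp Ropp_plus_distr Ropp_0) -big_split /=.
by apply: eq_bigr => u _; rewrite /node_gap nact_history.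
Qed.

Lemma expect_exp_gap t :
  expect p (fun w => exp (t * (Rn p w - Rhat w))) = \big[Rmult/1]_(u : A) node_mgf (p u) n t.
Proof.
rewrite -(eq_bigr _ (fun u _ => trials_expect_exp_node_gap n (p u) t)) -expect_prod_history.
by apply: eq_bigr => w _; rewrite Rn_sub_Rhat big_distrr /= exp_sum.
Qed.

Hypothesis hp : forall u, 0 <= p u <= 1.

Lemma weight_ge0 w : 0 <= weight p w.
Proof.
apply: (big_ind (fun x => 0 <= x)) => [|x y|[i u] _]; [lra | exact: Rmult_le_pos |].
by case: (w (i, u)) => /=; have := hp u; lra.
Qed.

Lemma lambda_ge0 : 0 <= lambda p.
Proof.
apply: (big_ind (fun x => 0 <= x)) => [|x y|u _]; [lra | lra |].
by have := hp u; lra.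
Qed.

Lemma gap_le_lambda w : (0 < n)%nat -> Rn p w - Rhat w <= lambda p.
Proof.
move=> n_gt0.
have : Rn p w <= lambda p by apply: sum_Rle => u; case: ifP => _; have := hp u; lra.
have : 0 <= Rhat w.
  apply: Rmult_le_pos; first exact: pos_INR.
  exact/Rlt_le/Rinv_0_lt_compat/lt_0_INR/ltP.
lra.
Qed.

Lemma prob_pred0 E : (forall w, ~~ E w) -> prob p E = 0.
Proof. by move=> notE; apply: big_pred0 => w; apply/negbTE. Qed.

Lemma prob_andb_ge E F :
  1 - prob p (fun w => ~~ E w) - prob p (fun w => ~~ F w) <= prob p (fun w => E w && F w).
Proof.
suff : \big[Rplus/0]_(w : outcome A n) weight p w
       <= prob p (fun w => E w && F w) + prob p (fun w => ~~ E w) + prob p (fun w => ~~ F w).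
  by rewrite sum_weight; lra.
rewrite /prob (big_mkcond (fun w => E w && F w)) (big_mkcond (fun w => ~~ E w))
  (big_mkcond (fun w => ~~ F w)) -!big_split /=; apply: sum_Rle => w.
by have := weight_ge0 w; case: (E w); case: (F w) => /=; lra.
Qed.

Lemma chernoff_bound E (X : outcome A n -> R) t : (forall w, E w -> t <= X w) ->
  prob p E <= exp (- t) * expect p (fun w => exp (X w)).
Proof.
move=> E_X; rewrite /prob /expect big_distrr big_mkcond /=; apply: sum_Rle => w.
rewrite Rmult_comm Rmult_assoc -exp_plus.
have := weight_ge0 w; have := exp_pos (X w + - t).
case: ifP => [/E_X tX | _] *; last by nra.
by have := exp_ineq1_le (X w + - t); nra.
Qed.

Lemma prod_node_mgf_le t K : (forall u, node_mgf (p u) n t <= exp (K * p u)) ->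
  \big[Rmult/1]_(u : A) node_mgf (p u) n t <= exp (K * lambda p).
Proof.
move=> mgf_le; rewrite /lambda big_distrr exp_sum /=.
by apply: prod_Rle => u; split; [exact: node_mgf_ge0 | exact: mgf_le].
Qed.

End Outcomes.

(* In both tails [y = sqrt (n lambda / L)]; the upper tail uses the Chernoff
   parameter [n / y], the lower one [- n s] with [s] from [lower_tail_exponent]. *)
Section Tails.
Variables (A : finType) (p : A -> R) (n : nat) (L y r b : R).
Hypotheses (hp : forall u, 0 <= p u <= 1) (n_gt0 : (0 < n)%nat).
Hypotheses (L_gt0 : 0 < L) (y_ge0 : 0 <= y) (lambda_eq : INR n * lambda p = y ^ 2 * L).
Hypothesis b_ge : L * (r * y + 1 / 3) <= INR n * b.

Let N_gt0 : 0 < INR n. Proof. exact/lt_0_INR/ltP. Qed.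

Lemma upper_tail : 2 <= r ->
  prob p (fun w : outcome A n => ~~ Rleb (Rn p w - Rhat w) b) <= exp (- L).
Proof.
move=> r_ge.
have [y_le1|y_gt1] := Rle_lt_dec y 1.
  rewrite prob_pred0; first exact/Rlt_le/exp_pos.
  move=> w; rewrite negbK; apply/RlebP.
  apply: Rle_trans (gap_le_lambda hp w n_gt0) _.
  have y2_le : y ^ 2 <= r * y by nra.
  by apply: (Rmult_le_reg_l (INR n)); nra.
have c_gt0 : 0 < / y by apply: Rinv_0_lt_compat; lra.
have yc : y * / y = 1 by field; lra.
set c := / y in c_gt0 yc.
have c_le1 : c <= 1 by nra.
apply: Rle_trans (chernoff_bound hp (X := fun w => INR n * c * (Rn p w - Rhat w))
                    (t := INR n * c * b) _) _.
  by move=> w /RlebP gap_gt; apply: Rmult_le_compat_l; nra.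
rewrite expect_exp_gap.
have := prod_node_mgf_le hp (K := INR n * c ^ 2)
          (fun u => node_mgf_pos_le (hp u) n_gt0 (conj c_gt0 c_le1)).
move=> /(Rmult_le_compat_l (exp (- (INR n * c * b)))) mgf_le.
apply: Rle_trans (mgf_le (Rlt_le _ _ (exp_pos _))) _.
rewrite -exp_plus; apply: exp_le_compat.
have -> : INR n * c ^ 2 * lambda p = L.
  transitivity (c ^ 2 * (INR n * lambda p)); first ring.
  by rewrite lambda_eq /c; field; lra.
have : c * (L * (r * y + 1 / 3)) <= c * (INR n * b) by apply: Rmult_le_compat_l; lra.
have -> : c * (L * (r * y + 1 / 3)) = L * r * (y * c) + c * L / 3 by rewrite /Rdiv; ring.
rewrite yc; have : 2 * L <= r * L by nra.
have : 0 <= c * L by nra.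
lra.
Qed.

Lemma lower_tail : 2.41 <= r ->
  prob p (fun w : outcome A n => ~~ Rleb (- b - lambda p / INR n) (Rn p w - Rhat w))
  <= exp (- L).
Proof.
move=> r_ge.
have [s s_ge0 exponent_le] := lower_tail_exponent y_ge0 r_ge.
apply: Rle_trans (chernoff_bound hp (X := fun w => - (INR n * s) * (Rn p w - Rhat w))
                    (t := INR n * s * (b + lambda p / INR n)) _) _.
  move=> w /RlebP gap_lt; have : 0 <= INR n * s by nra.
  nra.
rewrite expect_exp_gap.
have := prod_node_mgf_le hp (fun u => node_mgf_neg_le (hp u) n_gt0 s_ge0).
move=> /(Rmult_le_compat_l (exp (- (INR n * s * (b + lambda p / INR n))))) mgf_le.
apply: Rle_trans (mgf_le (Rlt_le _ _ (exp_pos _))) _.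
rewrite -exp_plus; apply: exp_le_compat.
set phi := exp s - 1 - s + s ^ 2 / 2 in exponent_le *.
have -> : - (INR n * s * (b + lambda p / INR n)) + (s + INR n * phi) * lambda p
          = - (s * (INR n * b)) + phi * (y ^ 2 * L) by rewrite -lambda_eq; field; lra.
have : s * (L * (r * y + 1 / 3)) <= s * (INR n * b) by apply: Rmult_le_compat_l.
have : L * (y ^ 2 * phi - s * (r * y + 1 / 3)) <= L * -1 by apply: Rmult_le_compat_l; lra.
nra.
Qed.

End Tails.

Lemma exists_sqrt_ratio (lam L N : R) : 0 <= lam -> 0 < L -> 0 < N ->
  exists2 y, 0 <= y & N * lam = y ^ 2 * L /\ N * sqrt (lam * L / N) = y * L.
Proof.
move=> lam_ge0 L_gt0 N_gt0.
have ratio_ge0 : 0 <= lam * L / N.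
  by apply: Rmult_le_pos; [nra | exact/Rlt_le/Rinv_0_lt_compat].
have q_ge0 := sqrt_pos (lam * L / N).
exists (N * sqrt (lam * L / N) / L).
  by apply: Rmult_le_pos; [nra | exact/Rlt_le/Rinv_0_lt_compat].
split; last by field; lra.
transitivity (N ^ 2 * (sqrt (lam * L / N) * sqrt (lam * L / N)) / L); last by field; lra.
by rewrite sqrt_sqrt //; field; lra.
Qed.

Close Scope R_scope.

Theorem theorem1 (A : finType) (p : A -> R)
  (hp : forall u, (0 <= p u <= 1)%R)
  (n : nat) (hn : (1 <= n)%N) (delta : R) (hd : (0 < delta < 1)%R) :
  (1 - delta <=
   prob p (fun w : outcome A n =>
     Rleb (- beta p n delta - lambda p / INR n) (Rn p w - Rhat w)
     && Rleb (Rn p w - Rhat w) (beta p n delta)))%R.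
Proof.
Local Open Scope R_scope.
have N_gt0 : 0 < INR n by exact/lt_0_INR/ltP.
set L := ln (4 / delta).
have L_gt0 : 0 < L.
  rewrite /L -ln_1; apply: ln_increasing; first lra.
  by apply: (Rmult_lt_reg_r delta); [lra | rewrite /Rdiv Rmult_assoc Rinv_l; lra].
have exp_L : exp (- L) = delta / 4.
  by rewrite exp_Ropp /L exp_ln; [field | apply: Rdiv_lt_0_compat]; lra.
have [y y_ge0 [lambda_eq sqrt_eq]] := exists_sqrt_ratio (lambda_ge0 hp) L_gt0 N_gt0.
have beta_eq : L * ((1 + sqrt 2) * y + 1 / 3) <= INR n * beta p n delta.
  right; transitivity ((1 + sqrt 2) * (INR n * sqrt (lambda p * L / INR n)) + L / 3).
    by rewrite sqrt_eq; field.
  by rewrite /beta -/L; field; lra.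
have := prob_andb_ge hp
  (fun w : outcome A n => Rleb (- beta p n delta - lambda p / INR n) (Rn p w - Rhat w))
  (fun w : outcome A n => Rleb (Rn p w - Rhat w) (beta p n delta)).
have := upper_tail hp hn L_gt0 y_ge0 lambda_eq beta_eq ltac:(have := sqrt2_ge; lra).
have := lower_tail hp hn L_gt0 y_ge0 lambda_eq beta_eq ltac:(have := sqrt2_ge; lra).
rewrite exp_L; lra.
Qed.
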